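(* The sets $C_{p_1},\dots,C_{p_n}$ are pairwise disjoint closed convex subsets of $\mathbb{R}^2$, and $C_{p_i}\subset W_{p_i}:=\{y\in\mathbb{R}^2: y\cdot(p_{i+1}-p_i)\le b_{i+1}-b_i\}\cap\{y\in\mathbb{R}^2: y\cdot(p_{i-1}-p_i)\le b_{i-1}-b_i\}$ for each $i$.
   Context: $n\ge3$; $p_1,\dots,p_n\in\mathbb{R}^2_{(u_1,u_2)}$ are distinct vertices, in counterclockwise order, of a convex polygon with interior $U$; indices mod $n$. $A\ge0$, $V(u)=A+\sum_i\frac{1}{2|u-p_i|}$. For $b_1,\dots,b_n\in\mathbb{R}$, $\varphi:\overline U\to\mathbb{R}$ is the unique continuous convex function, smooth in $U$, with $\det D^2\varphi=V$ in $U$, $\varphi(p_i)=b_i$, and $\varphi$ affine linear on each edge $[p_i,p_{i+1}]$. The subgradient set at a vertex is $C_{p_i}=\{y\in\mathbb{R}^2:\varphi(u)-\varphi(p_i)\ge\langle y,u-p_i\rangle\ \forall u\in\overline U\}$. *)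

From Stdlib Require Import Reals Lra Lia List.
From Coquelicot Require Import Coquelicot.
Open Scope R_scope.

Definition pt := (R * R)%type.

Definition dot (x y : pt) : R := fst x * fst y + snd x * snd y.
Definition psub (x y : pt) : pt := (fst x - fst y, snd x - snd y).
Definition cross (x y : pt) : R := fst x * snd y - snd x * fst y.
Definition enorm (x : pt) : R := sqrt (fst x ^ 2 + snd x ^ 2).
Definition pcomb (t : R) (x y : pt) : pt :=
  ((1 - t) * fst x + t * fst y, (1 - t) * snd x + t * snd y).

Definition idx (n i : nat) : nat := Nat.modulo i n.
Definition prv (n i : nat) : nat := Nat.modulo (i + n - 1) n.
Definition nxt (n i : nat) : nat := Nat.modulo (i + 1) n.

(* p_0,...,p_{n-1} are distinct vertices, in counterclockwise order,
   of a convex polygon: every other vertex lies strictly to the left of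
   each directed edge p_i -> p_{i+1}. *)
Definition ccw_convex_polygon (n : nat) (p : nat -> pt) : Prop :=
  (forall i j, (i < n)%nat -> (j < n)%nat -> i <> j -> p i <> p j) /\
  (forall i j, (i < n)%nat -> (j < n)%nat -> j <> i -> j <> nxt n i ->
     cross (psub (p (nxt n i)) (p i)) (psub (p j) (p i)) > 0).

Definition polyU (n : nat) (p : nat -> pt) (u : pt) : Prop :=
  forall i, (i < n)%nat -> cross (psub (p (nxt n i)) (p i)) (psub u (p i)) > 0.
Definition polyUbar (n : nat) (p : nat -> pt) (u : pt) : Prop :=
  forall i, (i < n)%nat -> cross (psub (p (nxt n i)) (p i)) (psub u (p i)) >= 0.

Definition Vfun (n : nat) (A : R) (p : nat -> pt) (u : pt) : R :=
  A + fold_right Rplus 0 (map (fun i => / (2 * enorm (psub u (p i)))) (seq 0 n)).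

(* partial derivatives; [false] = d/du1, [true] = d/du2 *)
Definition pderiv (b : bool) (f : pt -> R) : pt -> R :=
  fun u => if b then Derive (fun t => f (fst u, t)) (snd u)
           else Derive (fun t => f (t, snd u)) (fst u).
Definition pderivs (l : list bool) (f : pt -> R) : pt -> R :=
  fold_right pderiv f l.

Definition smooth_on (D : pt -> Prop) (f : pt -> R) : Prop :=
  forall l u, D u ->
    continuous (pderivs l f) u /\
    ex_derive (fun t => pderivs l f (t, snd u)) (fst u) /\
    ex_derive (fun t => pderivs l f (fst u, t)) (snd u).

Definition hess_det (f : pt -> R) (u : pt) : R :=
  pderivs (false :: false :: nil) f u * pderivs (true :: true :: nil) f u
  - pderivs (false :: true :: nil) f u * pderivs (true :: false :: nil) f u.

Definition continuous_on_set (D : pt -> Prop) (f : pt -> R) : Prop :=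
  forall u, D u -> forall eps, eps > 0 -> exists delta, delta > 0 /\
    forall v, D v -> enorm (psub v u) < delta -> Rabs (f v - f u) < eps.

Definition convex_on (D : pt -> Prop) (f : pt -> R) : Prop :=
  forall u v t, D u -> D v -> 0 <= t <= 1 ->
    f (pcomb t u v) <= (1 - t) * f u + t * f v.

Definition convex_set (C : pt -> Prop) : Prop :=
  forall y z t, C y -> C z -> 0 <= t <= 1 -> C (pcomb t y z).

Definition affine_on_segment (f : pt -> R) (x y : pt) : Prop :=
  exists a1 a2 c, forall t, 0 <= t <= 1 ->
    f (pcomb t x y) = a1 * fst (pcomb t x y) + a2 * snd (pcomb t x y) + c.

Definition is_solution (n : nat) (A : R) (p : nat -> pt) (b : nat -> R)
  (phi : pt -> R) : Prop :=
  continuous_on_set (polyUbar n p) phi /\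
  convex_on (polyUbar n p) phi /\
  smooth_on (polyU n p) phi /\
  (forall u, polyU n p u -> hess_det phi u = Vfun n A p u) /\
  (forall i, (i < n)%nat -> phi (p i) = b i) /\
  (forall i, (i < n)%nat -> affine_on_segment phi (p i) (p (nxt n i))).

Definition subgrad (n : nat) (p : nat -> pt) (phi : pt -> R) (i : nat) (y : pt) : Prop :=
  forall u, polyUbar n p u -> phi u - phi (p i) >= dot y (psub u (p i)).

Definition Wset (n : nat) (p : nat -> pt) (b : nat -> R) (i : nat) (y : pt) : Prop :=
  dot y (psub (p (nxt n i)) (p i)) <= b (nxt n i) - b i /\
  dot y (psub (p (prv n i)) (p i)) <= b (prv n i) - b i.

(* If y lies in C_{p_i} and C_{p_j}, the affine function l(u) = phi(p_i) + <y, u - p_i>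
   supports phi at both vertices, so by convexity phi = l on the segment [p_i, p_j].
   For non-adjacent vertices the open segment lies in U, where det D^2 phi = V > 0 makes
   phi strictly convex along every line: impossible.  For adjacent vertices the segment is
   an edge near which V stays bounded below by some c > 0.  In coordinates
   u = p_i + r tau' + s tau along the edge (tau = p_{i+1} - p_i, tau' its rotation by a right
   angle) the gap w = phi - l is nonnegative and vanishes at r = 0, so convexity bounds the
   normal slope w_r and gives int_{1/4}^{3/4} w_ss ds = O(r).  Since w_rr w_ss >= c + w_rs^2,
   w_rr >= 2 lam - lam^2 w_ss / c for every lam; with lam of order 1/r the bounded function
   F(r) = int_{1/4}^{3/4} w_r ds gets F'(r) >= kappa / r, hence is unbounded as r -> 0.
   Closedness and convexity of C_{p_i} hold for any subgradient set, and C_{p_i} lies in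
   W_{p_i} by the subgradient inequality at the two neighbouring vertices. *)

From Stdlib Require Import Reals Lra Lia List.
From Coquelicot Require Import Coquelicot.
Open Scope R_scope.

Lemma locally_R (P : R -> Prop) (x : R) :
  locally x P <-> exists del, 0 < del /\ forall y, Rabs (y - x) < del -> P y.
Proof.
  split.
  - intros [e He]. exists e. split; [apply cond_pos | exact He].
  - intros [del [Hdel HP]]. exists (mkposreal del Hdel). exact HP.
Qed.

Lemma locally_box (a b c d x y : R) : a < x < b -> c < y < d ->
  locally (x, y) (fun z : R * R => a < fst z < b /\ c < snd z < d).
Proof.
  intros Hx Hy.
  apply (proj1 (locally_2d_locally (fun u v => a < u < b /\ c < v < d) x y)).
  assert (He : 0 < Rmin (Rmin (x - a) (b - x)) (Rmin (y - c) (d - y)))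
    by (repeat apply Rmin_pos; lra).
  exists (mkposreal _ He). simpl. intros u v Hu Hv.
  apply Rabs_def2 in Hu. apply Rabs_def2 in Hv.
  pose proof (Rmin_l (Rmin (x - a) (b - x)) (Rmin (y - c) (d - y))).
  pose proof (Rmin_r (Rmin (x - a) (b - x)) (Rmin (y - c) (d - y))).
  pose proof (Rmin_l (x - a) (b - x)). pose proof (Rmin_r (x - a) (b - x)).
  pose proof (Rmin_l (y - c) (d - y)). pose proof (Rmin_r (y - c) (d - y)).
  lra.
Qed.

Lemma is_derive_le_of_increment_le (f : R -> R) (x d m del : R) :
  0 < del -> (forall h, 0 < h < del -> f (x + h) - f x <= m * h) ->
  is_derive f x d -> d <= m.
Proof.
  intros Hdel Hinc Hd. apply Rnot_lt_le. intros Hmd.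
  apply is_derive_Reals in Hd. destruct (Hd (d - m) ltac:(lra)) as [dl Hdl].
  pose proof (cond_pos dl). pose proof (Rmin_l del dl). pose proof (Rmin_r del dl).
  set (h := Rmin del dl / 2).
  assert (Hh : 0 < h) by (unfold h; assert (0 < Rmin del dl) by (apply Rmin_pos; lra); lra).
  assert (Hq : (f (x + h) - f x) / h <= m).
  { apply Rmult_le_reg_r with h; [lra |]. unfold Rdiv.
    rewrite Rmult_assoc, Rinv_l by lra. apply Rle_trans with (m * h); [| lra].
    rewrite Rmult_1_r. apply Hinc. unfold h in *; lra. }
  assert (Hdh : Rabs ((f (x + h) - f x) / h - d) < d - m).
  { apply Hdl; [lra |]. rewrite Rabs_pos_eq; unfold h in *; lra. }
  apply Rabs_lt_between in Hdh. lra.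
Qed.

Lemma is_derive_minus_const (f : R -> R) (x d c : R) :
  is_derive f x d -> is_derive (fun t => f t - c) x d.
Proof.
  intros H. replace d with (minus d 0) by (unfold minus, plus, opp; simpl; ring).
  exact (is_derive_minus f (fun _ => c) x d 0 H (is_derive_const c x)).
Qed.

Lemma derive_ge_inv_unbounded (f df : R -> R) (a kap M : R) :
  0 < a -> 0 < kap ->
  (forall r, 0 < r <= a -> is_derive f r (df r)) ->
  (forall r, 0 < r <= a -> kap / r <= df r) ->
  (forall r, 0 < r <= a -> Rabs (f r) <= M) -> False.
Proof.
  intros Ha Hkap Hf Hdf Hbnd.
  set (h := fun t => f t - kap * ln t).
  assert (Hh : forall t, 0 < t <= a -> is_derive h t (df t - kap / t)).
  { intros t Ht. apply (is_derive_minus f (fun t => kap * ln t)); [exact (Hf t Ht) |].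
    apply (is_derive_scal ln t kap (/ t)). apply is_derive_ln. lra. }
  assert (Hmono : forall r, 0 < r <= a -> h r <= h a).
  { intros r Hr.
    destruct (MVT_gen h r a (fun t => df t - kap / t)) as [c [Hc Hdiff]];
      rewrite ?Rmin_left, ?Rmax_right in * by lra.
    - intros t Ht. apply Hh. lra.
    - intros t Ht. apply continuity_pt_filterlim.
      exact (ex_derive_continuous h t (ex_intro _ _ (Hh t ltac:(lra)))).
    - assert (kap / c <= df c) by (apply Hdf; lra). nra. }
  assert (HM : 0 <= M) by (apply Rle_trans with (Rabs (f a)); [apply Rabs_pos | apply Hbnd; lra]).
  assert (Hq : 0 < (2 * M + 1) / kap) by (apply Rdiv_lt_0_compat; lra).
  set (r := a * exp (- ((2 * M + 1) / kap))).
  assert (Hexp : exp (- ((2 * M + 1) / kap)) < exp 0) by (apply exp_increasing; lra).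
  rewrite exp_0 in Hexp.
  assert (Hr : 0 < r <= a) by (unfold r; split; [apply Rmult_lt_0_compat; [lra | apply exp_pos] | nra]).
  assert (Hlnr : ln r = ln a - (2 * M + 1) / kap).
  { unfold r. rewrite ln_mult, ln_exp by (lra || apply exp_pos). ring. }
  assert (Hr_le := Hmono r Hr). unfold h in Hr_le. rewrite Hlnr in Hr_le.
  replace (kap * (ln a - (2 * M + 1) / kap)) with (kap * ln a - (2 * M + 1)) in Hr_le by (field; lra).
  assert (B1 := Hbnd r Hr). assert (B2 := Hbnd a ltac:(lra)).
  apply Rabs_le_between in B1. apply Rabs_le_between in B2. lra.
Qed.

(** * Calculus in the plane *)

Definition chart (x a b : pt) (u v : R) : pt :=
  (fst x + u * fst a + v * fst b, snd x + u * snd a + v * snd b).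

Lemma continuous_affine_R2 (c a b : R) (z : R * R) :
  continuous (fun w : R * R => c + fst w * a + snd w * b) z.
Proof.
  destruct z as [z1 z2].
  apply (continuous_plus (fun w : R * R => c + fst w * a) (fun w : R * R => snd w * b)).
  - apply (continuous_plus (fun _ : R * R => c) (fun w : R * R => fst w * a)).
    + apply continuous_const.
    + apply (continuous_mult (fun w : R * R => fst w) (fun _ => a)).
      * apply continuous_fst.
      * apply continuous_const.
  - apply (continuous_mult (fun w : R * R => snd w) (fun _ => b)).
    + apply continuous_snd.
    + apply continuous_const.
Qed.

Lemma continuous_pair_R {U : UniformSpace} (f g : U -> R) (z : U) :
  continuous f z -> continuous g z -> continuous (fun w => (f w, g w)) z.
Proof.
  intros Hf Hg. apply (continuous_comp_2 f g pair z Hf Hg).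
  apply (continuous_ext (fun w : R * R => w)); [intros [] |]; auto using continuous_id.
Qed.

Lemma continuous_chart (x a b : pt) (z : R * R) :
  continuous (fun w : R * R => chart x a b (fst w) (snd w)) z.
Proof. apply continuous_pair_R; apply continuous_affine_R2. Qed.

Lemma continuity_2d_pt_chart (g : pt -> R) (x a b : pt) (u v : R) :
  continuous g (chart x a b u v) ->
  continuity_2d_pt (fun u' v' => g (chart x a b u' v')) u v.
Proof.
  intros Hg. apply continuity_2d_pt_filterlim.
  exact (continuous_comp _ g (u, v) (continuous_chart x a b (u, v)) Hg).
Qed.

Lemma continuous_chart_snd (g : pt -> R) (x a b : pt) (u v : R) :
  continuous g (chart x a b u v) -> continuous (fun v' => g (chart x a b u v')) v.
Proof.
  intros Hg. apply (continuous_comp (fun v' => (u, v')) (fun w => g (chart x a b (fst w) (snd w)))).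
  - apply continuous_pair_R; [apply continuous_const | apply continuous_id].
  - exact (continuous_comp _ g (u, v) (continuous_chart x a b (u, v)) Hg).
Qed.

Definition padd (x a : pt) (t : R) : pt := (fst x + t * fst a, snd x + t * snd a).

Definition dderiv (a : pt) (g : pt -> R) (x : pt) : R :=
  fst a * pderiv false g x + snd a * pderiv true g x.

Lemma differentiable_pt_lim_of_partials (g : pt -> R) (z : pt) :
  locally z (fun u => ex_derive (fun s => g (s, snd u)) (fst u)) ->
  ex_derive (fun s => g (fst z, s)) (snd z) ->
  continuous (pderiv false g) z ->
  differentiable_pt_lim (fun u v => g (u, v)) (fst z) (snd z)
    (pderiv false g z) (pderiv true g z).
Proof.
  destruct z as [z1 z2]; simpl. intros H1 H2 H3.
  apply filterdiff_differentiable_pt_lim.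
  apply (is_derive_filterdiff (fun u v => g (u, v)) z1 z2 (fun u v => pderiv false g (u, v))).
  - revert H1. apply filter_imp. intros [u v] Hu. exact (Derive_correct _ _ Hu).
  - exact (Derive_correct _ _ H2).
  - apply (continuous_ext (pderiv false g)); [intros []; reflexivity | exact H3].
Qed.

Lemma is_derive_along_line (g : pt -> R) (x a : pt) (t : R) :
  locally (padd x a t) (fun u => ex_derive (fun s => g (s, snd u)) (fst u)) ->
  ex_derive (fun s => g (fst (padd x a t), s)) (snd (padd x a t)) ->
  continuous (pderiv false g) (padd x a t) ->
  is_derive (fun s => g (padd x a s)) t (dderiv a g (padd x a t)).
Proof.
  intros H1 H2 H3.
  assert (Hd := differentiable_pt_lim_of_partials g _ H1 H2 H3).
  apply is_derive_Reals. unfold dderiv.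
  rewrite (Rmult_comm (fst a)), (Rmult_comm (snd a)).
  apply (derivable_pt_lim_comp_2d (fun u v => g (u, v))
    (fun s => fst x + s * fst a) (fun s => snd x + s * snd a)); [exact Hd | |];
    apply is_derive_Reals; auto_derive; auto; ring.
Qed.

Lemma continuous_padd (x a : pt) (t : R) : continuous (padd x a) t.
Proof.
  apply (continuous_ext (fun t => chart x a a t 0)); [intros t'; unfold chart, padd; f_equal; ring |].
  apply (continuous_comp (fun t => (t, 0)) (fun w => chart x a a (fst w) (snd w))).
  - apply continuous_pair_R; [apply continuous_id | apply continuous_const].
  - apply continuous_chart.
Qed.

Lemma padd_0 (x a : pt) : padd x a 0 = x.
Proof. destruct x; unfold padd; simpl; f_equal; ring. Qed.

Lemma padd_psub (u v : pt) (t : R) : padd u (psub v u) t = pcomb t u v.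
Proof. unfold padd, pcomb, psub; simpl. f_equal; ring. Qed.

Lemma dderiv_lin (v a b : pt) (c1 c2 : R) (g : pt -> R) (x : pt) :
  v = (c1 * fst a + c2 * fst b, c1 * snd a + c2 * snd b) ->
  dderiv v g x = c1 * dderiv a g x + c2 * dderiv b g x.
Proof. intros ->. unfold dderiv; simpl. ring. Qed.

Definition perp (a : pt) : pt := (- snd a, fst a).

Lemma cross_perp (a : pt) : cross a (perp a) = fst a ^ 2 + snd a ^ 2.
Proof. unfold cross, perp; simpl. ring. Qed.

Lemma norm2_pos (a : pt) : a <> (0, 0) -> 0 < fst a ^ 2 + snd a ^ 2.
Proof.
  destruct a as [a1 a2]; simpl. intros Ha.
  destruct (Req_dec a1 0) as [-> |]; [destruct (Req_dec a2 0) as [-> |] |]; [now exfalso | nra | nra].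
Qed.

Definition hess (phi : pt -> R) (a b : pt) (x : pt) : R :=
  fst a * dderiv b (pderiv false phi) x + snd a * dderiv b (pderiv true phi) x.

Lemma hess_det_identity (phi : pt -> R) (a b x : pt) :
  hess phi a a x * hess phi b b x - hess phi a b x * hess phi b a x
  = hess_det phi x * cross a b ^ 2.
Proof. unfold hess, dderiv, hess_det, cross; simpl. ring. Qed.

(** * Smooth convex functions *)

Section SmoothOnOpen.

Variables (D : pt -> Prop) (phi : pt -> R).
Hypotheses (D_open : open D) (phi_smooth : smooth_on D phi).

Lemma locally_line_in (x a : pt) (t : R) :
  D (padd x a t) -> locally t (fun s => D (padd x a s)).
Proof. intros Hx. exact (continuous_padd x a t D (D_open _ Hx)). Qed.

Lemma is_derive_pderivs_line (l : list bool) (x a : pt) (t : R) :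
  D (padd x a t) ->
  is_derive (fun s => pderivs l phi (padd x a s)) t (dderiv a (pderivs l phi) (padd x a t)).
Proof.
  intros Hx. apply is_derive_along_line.
  - apply (filter_imp D); [| exact (D_open _ Hx)].
    intros u Hu. exact (proj1 (proj2 (phi_smooth l u Hu))).
  - exact (proj2 (proj2 (phi_smooth l _ Hx))).
  - exact (proj1 (phi_smooth (false :: l) _ Hx)).
Qed.

Lemma is_derive_dderiv_line (a b x : pt) (t : R) :
  D (padd x b t) ->
  is_derive (fun s => dderiv a phi (padd x b s)) t (hess phi a b (padd x b t)).
Proof.
  intros Hx. unfold dderiv at 1, hess.
  assert (D1 := is_derive_pderivs_line (false :: nil) x b t Hx).
  assert (D2 := is_derive_pderivs_line (true :: nil) x b t Hx).
  exact (is_derive_plus _ _ _ _ _ (is_derive_scal _ _ (fst a) _ D1) (is_derive_scal _ _ (snd a) _ D2)).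
Qed.

Lemma hess_continuous (a b x : pt) : D x -> continuous (hess phi a b) x.
Proof.
  intros Hx.
  assert (C : forall l, continuous (pderivs l phi) x) by (intros l; exact (proj1 (phi_smooth l x Hx))).
  assert (Lin : forall f g : pt -> R, continuous f x -> continuous g x ->
            forall c1 c2, continuous (fun u => c1 * f u + c2 * g u) x).
  { intros f g Hf Hg c1 c2.
    apply (continuous_plus (fun u => c1 * f u) (fun u => c2 * g u)).
    - exact (continuous_scal_r c1 f x Hf).
    - exact (continuous_scal_r c2 g x Hg). }
  unfold hess, dderiv. apply Lin; apply Lin; apply (C (_ :: _ :: nil)).
Qed.

Lemma pderiv_comm (x : pt) :
  D x -> pderiv false (pderiv true phi) x = pderiv true (pderiv false phi) x.
Proof.
  destruct x as [x1 x2]. intros Hx.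
  assert (C : forall l, continuity_2d_pt (fun u v => pderivs l phi (u, v)) x1 x2).
  { intros l. apply continuity_2d_pt_filterlim.
    apply (continuous_ext (pderivs l phi) (fun z : R * R => pderivs l phi (fst z, snd z)));
      [intros []; reflexivity |].
    exact (proj1 (phi_smooth l _ Hx)). }
  unfold pderiv; simpl.
  apply (Schwarz (fun u v => phi (u, v))); [| exact (C (false :: true :: nil)) | exact (C (true :: false :: nil))].
  apply locally_2d_locally. apply (filter_imp D); [| exact (D_open _ Hx)].
  intros [u v] Hu. simpl.
  destruct (phi_smooth nil _ Hu) as [_ [H1 H2]].
  destruct (phi_smooth (true :: nil) _ Hu) as [_ [H3 _]].
  destruct (phi_smooth (false :: nil) _ Hu) as [_ [_ H4]].
  auto.
Qed.

Lemma hess_sym (a b x : pt) : D x -> hess phi a b x = hess phi b a x.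
Proof. intros Hx. unfold hess, dderiv. rewrite (pderiv_comm x Hx). ring. Qed.

Lemma hess_zero_of_affine_on_line (a x : pt) (c0 c1 : R) :
  D x -> locally 0 (fun t => phi (padd x a t) = c0 + c1 * t) -> hess phi a a x = 0.
Proof.
  intros Hx Haff. rewrite <- (padd_0 x a) in Hx |- *.
  assert (Hslope : locally 0 (fun t => dderiv a phi (padd x a t) = c1)).
  { apply (filter_imp (fun t => D (padd x a t) /\ locally t (fun s => phi (padd x a s) = c0 + c1 * s))).
    - intros t [Ht Hloc].
      assert (H1 : is_derive (fun s => c0 + c1 * s) t (dderiv a phi (padd x a t))).
      { apply (is_derive_ext_loc (fun s => phi (padd x a s))); [exact Hloc |].
        exact (is_derive_pderivs_line nil x a t Ht). }
      assert (H2 : is_derive (fun s => c0 + c1 * s) t c1) by (auto_derive; [auto | ring]).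
      rewrite <- (is_derive_unique _ _ _ H1). exact (is_derive_unique _ _ _ H2).
    - apply filter_and; [exact (locally_line_in x a 0 Hx) | exact (locally_locally _ _ Haff)]. }
  assert (H0 : is_derive (fun t => dderiv a phi (padd x a t)) 0 0).
  { apply (is_derive_ext_loc (fun _ => c1)); [| exact (is_derive_const (K := R_AbsRing) c1 0)].
    revert Hslope. apply filter_imp. intros t Ht. now rewrite Ht. }
  rewrite <- (is_derive_unique _ _ _ (is_derive_dderiv_line a a x 0 Hx)).
  exact (is_derive_unique _ _ _ H0).
Qed.

Variable E : pt -> Prop.
Hypotheses (D_sub_E : forall u, D u -> E u) (phi_convex : convex_on E phi).

Lemma convex_tangent (u v : pt) : D u -> E v -> dderiv (psub v u) phi u <= phi v - phi u.
Proof.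
  intros Hu Hv.
  assert (Hd := is_derive_pderivs_line nil u (psub v u) 0 ltac:(rewrite padd_0; exact Hu)).
  rewrite padd_0 in Hd. simpl in Hd.
  refine (is_derive_le_of_increment_le _ 0 _ _ 1 Rlt_0_1 (fun h Hh => _) Hd).
  rewrite Rplus_0_l, padd_0, padd_psub.
  assert (Hc := phi_convex u v h (D_sub_E u Hu) Hv ltac:(lra)).
  lra.
Qed.

Lemma hess_nonneg (a x : pt) : D x -> 0 <= hess phi a a x.
Proof.
  intros Hx.
  assert (Hd := is_derive_dderiv_line a a x 0 ltac:(rewrite padd_0; exact Hx)).
  rewrite padd_0 in Hd. apply is_derive_opp in Hd.
  destruct (proj1 (locally_R _ _) (locally_line_in x a 0 ltac:(rewrite padd_0; exact Hx))) as [del [Hdel Hin]].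
  cut (opp (hess phi a a x) <= 0); [unfold opp; simpl; lra |].
  refine (is_derive_le_of_increment_le _ 0 _ _ del Hdel (fun h Hh => _) Hd).
  rewrite Rplus_0_l, padd_0. unfold opp; simpl.
  assert (Hxh : D (padd x a h)) by (apply Hin; rewrite Rminus_0_r, Rabs_pos_eq; lra).
  assert (T1 := convex_tangent x (padd x a h) Hx (D_sub_E _ Hxh)).
  assert (T2 := convex_tangent (padd x a h) x Hxh (D_sub_E _ Hx)).
  rewrite (dderiv_lin _ a a h 0) in T1 by (unfold psub, padd; simpl; f_equal; ring).
  rewrite (dderiv_lin _ a a (- h) 0) in T2 by (unfold psub, padd; simpl; f_equal; ring).
  nra.
Qed.

Lemma hess_pos (a x : pt) :
  D x -> 0 < hess_det phi x -> a <> (0, 0) -> 0 < hess phi a a x.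
Proof.
  intros Hx Hdet Ha.
  assert (Id := hess_det_identity phi a (perp a) x).
  rewrite (hess_sym (perp a) a x Hx), cross_perp in Id.
  assert (Hn := norm2_pos a Ha).
  assert (H0 := hess_nonneg a x Hx). assert (H1 := hess_nonneg (perp a) x Hx).
  assert (0 < hess_det phi x * (fst a ^ 2 + snd a ^ 2) ^ 2) by (apply Rmult_lt_0_compat; nra).
  destruct H0 as [| H0]; [assumption |]. rewrite <- H0 in Id. nra.
Qed.

End SmoothOnOpen.

(** * No affine contact along an edge *)

Lemma chart_padd_fst (x a b : pt) (u v : R) : chart x a b u v = padd (padd x b v) a u.
Proof. unfold chart, padd; simpl. f_equal; ring. Qed.

Lemma chart_padd_snd (x a b : pt) (u v : R) : chart x a b u v = padd (padd x a u) b v.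
Proof. unfold chart, padd; simpl. f_equal; ring. Qed.

Section EdgeBlowUp.

Variables (D E : pt -> Prop) (phi : pt -> R) (P0 tau y : pt) (r0 c : R).

(* [r] is the normal and [s] the tangential coordinate: the edge is [X 0 s], 0 <= s <= 1. *)
Local Notation X := (chart P0 (perp tau) tau).

Hypotheses (D_open : open D) (D_sub_E : forall u, D u -> E u)
  (phi_smooth : smooth_on D phi) (phi_convex : convex_on E phi)
  (r0_pos : 0 < r0) (c_pos : 0 < c)
  (strip_in_D : forall r s, 0 < r <= r0 -> 1 / 8 <= s <= 7 / 8 -> D (X r s))
  (edge_in_E : forall s, 0 <= s <= 1 -> E (X 0 s))
  (y_subgrad : forall u, E u -> phi u - phi P0 >= dot y (psub u P0))
  (edge_affine : forall s, 0 <= s <= 1 -> phi (X 0 s) = phi P0 + s * dot y tau)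
  (det_bound : forall r s, 0 < r <= r0 -> 1 / 8 <= s <= 7 / 8 ->
     c <= hess_det phi (X r s) * cross tau (perp tau) ^ 2).

Definition gap (r s : R) : R := phi (X r s) - phi P0 - dot y (psub (X r s) P0).
Definition gap_r (r s : R) : R := dderiv (perp tau) phi (X r s) - dot y (perp tau).
Definition gap_s (r s : R) : R := dderiv tau phi (X r s) - dot y tau.
Definition flux (r : R) : R := RInt (gap_r r) (1 / 4) (3 / 4).
Definition flux_deriv (r : R) : R := RInt (fun s => hess phi (perp tau) (perp tau) (X r s)) (1 / 4) (3 / 4).
Definition gap_r_bound : R := 2 * (gap r0 (1 / 4) + gap r0 (3 / 4)) / r0 + 1.

Lemma gap_nonneg (r s : R) : E (X r s) -> 0 <= gap r s.
Proof. intros H. specialize (y_subgrad _ H). unfold gap. lra. Qed.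

Lemma gap_edge (s : R) : 0 <= s <= 1 -> gap 0 s = 0.
Proof.
  intros Hs. unfold gap. rewrite edge_affine by exact Hs.
  unfold dot, psub, chart, perp; simpl. ring.
Qed.

Lemma gap_tangent (r s r' s' : R) : D (X r s) -> E (X r' s') ->
  (r' - r) * gap_r r s + (s' - s) * gap_s r s <= gap r' s' - gap r s.
Proof.
  intros H H'.
  assert (T := convex_tangent D phi D_open phi_smooth E D_sub_E phi_convex _ _ H H').
  rewrite (dderiv_lin _ (perp tau) tau (r' - r) (s' - s)) in T
    by (unfold psub, chart; simpl; f_equal; ring).
  assert (dot y (psub (X r' s') P0) - dot y (psub (X r s) P0)
          = (r' - r) * dot y (perp tau) + (s' - s) * dot y tau)
    by (unfold dot, psub, chart, perp; simpl; ring).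
  unfold gap, gap_r, gap_s. lra.
Qed.

Lemma gap_r_nonneg (r s : R) : 0 < r <= r0 -> 1 / 8 <= s <= 7 / 8 -> 0 <= gap_r r s.
Proof.
  intros Hr Hs.
  assert (T := gap_tangent r s 0 s (strip_in_D r s Hr Hs) (edge_in_E s ltac:(lra))).
  rewrite gap_edge in T by lra.
  assert (G := gap_nonneg r s (D_sub_E _ (strip_in_D r s Hr Hs))).
  nra.
Qed.

Lemma gap_far_le (s : R) : 1 / 4 <= s <= 3 / 4 -> gap r0 s <= gap r0 (1 / 4) + gap r0 (3 / 4).
Proof.
  intros Hs.
  assert (Hin : forall s', 1 / 8 <= s' <= 7 / 8 -> E (X r0 s'))
    by (intros s' Hs'; apply D_sub_E, strip_in_D; lra).
  assert (G1 := gap_nonneg r0 (1 / 4) (Hin (1 / 4) ltac:(lra))).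
  assert (G3 := gap_nonneg r0 (3 / 4) (Hin (3 / 4) ltac:(lra))).
  set (t := 2 * s - 1 / 2).
  assert (Cv := phi_convex _ _ t (Hin (1 / 4) ltac:(lra)) (Hin (3 / 4) ltac:(lra)) ltac:(unfold t; lra)).
  replace (pcomb t (X r0 (1 / 4)) (X r0 (3 / 4))) with (X r0 s) in Cv
    by (unfold pcomb, chart, t; f_equal; simpl; field).
  assert (dot y (psub (X r0 s) P0) = (1 - t) * dot y (psub (X r0 (1 / 4)) P0)
                                     + t * dot y (psub (X r0 (3 / 4)) P0))
    by (unfold dot, psub, chart, t; simpl; field).
  assert (gap r0 s <= (1 - t) * gap r0 (1 / 4) + t * gap r0 (3 / 4)) by (unfold gap; lra).
  unfold t in *. nra.
Qed.

Lemma gap_r_le_bound (r s : R) : 0 < r <= r0 / 2 -> 1 / 4 <= s <= 3 / 4 -> gap_r r s <= gap_r_bound.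
Proof.
  intros Hr Hs. assert (HX := strip_in_D r s ltac:(lra) ltac:(lra)).
  assert (T := gap_tangent r s r0 s HX (D_sub_E _ (strip_in_D r0 s ltac:(lra) ltac:(lra)))).
  assert (G := gap_nonneg r s (D_sub_E _ HX)).
  assert (Hfar := gap_far_le s Hs).
  assert (0 <= gap_r r s) by (apply gap_r_nonneg; lra).
  assert (Hq : gap_r r s <= 2 * (gap r0 (1 / 4) + gap r0 (3 / 4)) / r0).
  { apply Rmult_le_reg_l with (r0 / 2); [lra |].
    replace (r0 / 2 * (2 * (gap r0 (1 / 4) + gap r0 (3 / 4)) / r0))
      with (gap r0 (1 / 4) + gap r0 (3 / 4)) by (field; lra).
    nra. }
  unfold gap_r_bound. lra.
Qed.

Lemma gap_s_bounds (r s : R) : 0 < r <= r0 -> 1 / 8 <= s <= 7 / 8 ->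
  - (r * gap_r r s) <= s * gap_s r s /\ (1 - s) * gap_s r s <= r * gap_r r s.
Proof.
  intros Hr Hs.
  assert (HX := strip_in_D r s Hr Hs).
  assert (G := gap_nonneg r s (D_sub_E _ HX)).
  assert (T0 := gap_tangent r s 0 0 HX (edge_in_E 0 ltac:(lra))).
  assert (T1 := gap_tangent r s 0 1 HX (edge_in_E 1 ltac:(lra))).
  rewrite gap_edge in T0, T1 by lra.
  split; nra.
Qed.

Lemma hess_normal_lower (r s lam : R) : 0 < r <= r0 -> 1 / 8 <= s <= 7 / 8 ->
  2 * lam - lam ^ 2 / c * hess phi tau tau (X r s) <= hess phi (perp tau) (perp tau) (X r s).
Proof.
  intros Hr Hs. assert (HX := strip_in_D r s Hr Hs).
  assert (Id := hess_det_identity phi tau (perp tau) (X r s)).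
  rewrite (hess_sym D phi D_open phi_smooth (perp tau) tau _ HX) in Id.
  assert (Hdet := det_bound r s Hr Hs).
  assert (HA := hess_nonneg D phi D_open phi_smooth E D_sub_E phi_convex tau _ HX).
  set (a := hess phi tau tau (X r s)) in *.
  set (bb := hess phi (perp tau) (perp tau) (X r s)) in *.
  set (cc := hess phi tau (perp tau) (X r s)) in *.
  assert (Hab : c <= a * bb) by (pose proof (pow2_ge_0 cc); lra).
  assert (Ha : 0 < a) by (destruct HA as [| HA]; [lra | rewrite <- HA in Hab; lra]).
  assert (Hkey : 0 <= a * c * (bb - (2 * lam - lam ^ 2 / c * a))).
  { replace (a * c * (bb - (2 * lam - lam ^ 2 / c * a)))
      with (c * (a * bb - c) + (c - lam * a) ^ 2) by (field; lra).
    pose proof (pow2_ge_0 (c - lam * a)). nra. }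
  assert (0 < a * c) by nra. nra.
Qed.

Lemma is_derive_gap_r_r (r s : R) : 0 < r <= r0 -> 1 / 8 <= s <= 7 / 8 ->
  is_derive (fun r' => gap_r r' s) r (hess phi (perp tau) (perp tau) (X r s)).
Proof.
  intros Hr Hs. apply is_derive_minus_const.
  apply (is_derive_ext (fun r' => dderiv (perp tau) phi (padd (padd P0 tau s) (perp tau) r'))).
  { intros r'. now rewrite chart_padd_fst. }
  rewrite chart_padd_fst. apply (is_derive_dderiv_line D phi D_open phi_smooth).
  rewrite <- chart_padd_fst. exact (strip_in_D r s Hr Hs).
Qed.

Lemma is_derive_gap_s (g : pt) (r s : R) : 0 < r <= r0 -> 1 / 8 <= s <= 7 / 8 ->
  is_derive (fun s' => dderiv g phi (X r s') - dot y g) s (hess phi g tau (X r s)).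
Proof.
  intros Hr Hs. apply is_derive_minus_const.
  apply (is_derive_ext (fun s' => dderiv g phi (padd (padd P0 (perp tau) r) tau s'))).
  { intros s'. now rewrite chart_padd_snd. }
  rewrite chart_padd_snd. apply (is_derive_dderiv_line D phi D_open phi_smooth).
  rewrite <- chart_padd_snd. exact (strip_in_D r s Hr Hs).
Qed.

Lemma continuous_hess_chart (g : pt) (r s : R) : 0 < r <= r0 -> 1 / 8 <= s <= 7 / 8 ->
  continuous (fun s' => hess phi g g (X r s')) s.
Proof.
  intros Hr Hs. apply (continuous_chart_snd (hess phi g g)).
  exact (hess_continuous D phi phi_smooth g g _ (strip_in_D r s Hr Hs)).
Qed.

Lemma ex_RInt_gap_r (r : R) : 0 < r <= r0 -> ex_RInt (gap_r r) (1 / 4) (3 / 4).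
Proof.
  intros Hr. apply (ex_RInt_continuous (V := R_CompleteNormedModule)).
  rewrite Rmin_left, Rmax_right by lra. intros s Hs.
  exact (ex_derive_continuous _ _ (ex_intro _ _ (is_derive_gap_s (perp tau) r s Hr ltac:(lra)))).
Qed.

Lemma gap_r_bound_ge_1 : 1 <= gap_r_bound.
Proof.
  assert (G1 := gap_nonneg r0 (1 / 4) (D_sub_E _ (strip_in_D r0 (1 / 4) ltac:(lra) ltac:(lra)))).
  assert (G3 := gap_nonneg r0 (3 / 4) (D_sub_E _ (strip_in_D r0 (3 / 4) ltac:(lra) ltac:(lra)))).
  assert (0 <= 2 * (gap r0 (1 / 4) + gap r0 (3 / 4)) / r0) by (apply Rdiv_le_0_compat; lra).
  unfold gap_r_bound. lra.
Qed.

Lemma flux_bounded (r : R) : 0 < r <= r0 / 2 -> Rabs (flux r) <= gap_r_bound / 2.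
Proof.
  intros Hr. assert (Hex := ex_RInt_gap_r r ltac:(lra)).
  assert (Hlow : RInt (fun _ => 0) (1 / 4) (3 / 4) <= flux r).
  { apply RInt_le; [lra | apply ex_RInt_const | exact Hex |].
    intros s Hs. apply gap_r_nonneg; lra. }
  assert (Hup : flux r <= RInt (fun _ => gap_r_bound) (1 / 4) (3 / 4)).
  { apply RInt_le; [lra | exact Hex | apply ex_RInt_const |].
    intros s Hs. apply gap_r_le_bound; lra. }
  rewrite !RInt_const in Hlow, Hup. unfold scal in Hlow, Hup; simpl in Hlow, Hup.
  unfold mult in Hlow, Hup; simpl in Hlow, Hup.
  apply Rabs_le. lra.
Qed.

Lemma is_derive_flux (r : R) : 0 < r < r0 -> is_derive flux r (flux_deriv r).
Proof.
  intros Hr.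
  assert (Hnear : locally r (fun u => 0 < u < r0)).
  { apply (locally_interval _ r 0 r0); simpl; [lra | lra | auto]. }
  replace (flux_deriv r) with (RInt (fun s => Derive (fun u => gap_r u s) r) (1 / 4) (3 / 4)).
  2: { apply RInt_ext. rewrite Rmin_left, Rmax_right by lra. intros s Hs.
       apply is_derive_unique, is_derive_gap_r_r; lra. }
  apply (is_derive_RInt_param (fun u s => gap_r u s)); rewrite ?Rmin_left, ?Rmax_right by lra.
  - revert Hnear. apply filter_imp. intros u Hu s Hs.
    eexists. apply is_derive_gap_r_r; lra.
  - intros s Hs.
    apply (continuity_2d_pt_ext_loc (fun u v => hess phi (perp tau) (perp tau) (X u v))).
    + apply locally_2d_locally.
      apply (filter_imp (fun z : R * R => 0 < fst z < r0 /\ 1 / 8 < snd z < 7 / 8)).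
      * intros [u v] [Hu Hv]. simpl in Hu, Hv. symmetry.
        apply is_derive_unique, is_derive_gap_r_r; simpl; lra.
      * apply locally_box; lra.
    + apply continuity_2d_pt_chart.
      exact (hess_continuous D phi phi_smooth _ _ _ (strip_in_D r s ltac:(lra) ltac:(lra))).
  - revert Hnear. apply filter_imp. intros u Hu. apply ex_RInt_gap_r. lra.
Qed.

Lemma is_RInt_hess_tangent (r : R) : 0 < r <= r0 / 2 ->
  is_RInt (fun s => hess phi tau tau (X r s)) (1 / 4) (3 / 4) (gap_s r (3 / 4) - gap_s r (1 / 4)).
Proof.
  intros Hr.
  apply (is_RInt_derive (gap_s r)); rewrite Rmin_left, Rmax_right by lra; intros s Hs.
  - apply is_derive_gap_s; lra.
  - apply continuous_hess_chart; lra.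
Qed.

Lemma gap_s_increment_le (r : R) : 0 < r <= r0 / 2 ->
  gap_s r (3 / 4) - gap_s r (1 / 4) <= 8 * r * gap_r_bound.
Proof.
  intros Hr.
  assert (B3 := gap_s_bounds r (3 / 4) ltac:(lra) ltac:(lra)).
  assert (B1 := gap_s_bounds r (1 / 4) ltac:(lra) ltac:(lra)).
  assert (gap_r r (3 / 4) <= gap_r_bound) by (apply gap_r_le_bound; lra).
  assert (gap_r r (1 / 4) <= gap_r_bound) by (apply gap_r_le_bound; lra).
  assert (0 <= gap_r r (1 / 4)) by (apply gap_r_nonneg; lra).
  nra.
Qed.

Lemma flux_deriv_ge (r lam : R) : 0 < r <= r0 / 2 ->
  lam - lam ^ 2 / c * (gap_s r (3 / 4) - gap_s r (1 / 4)) <= flux_deriv r.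
Proof.
  intros Hr.
  assert (Hlow : is_RInt (fun s => 2 * lam - lam ^ 2 / c * hess phi tau tau (X r s)) (1 / 4) (3 / 4)
                   (lam - lam ^ 2 / c * (gap_s r (3 / 4) - gap_s r (1 / 4)))).
  { assert (H := is_RInt_minus _ _ _ _ _ _ (is_RInt_const (1 / 4) (3 / 4) (2 * lam))
                   (is_RInt_scal _ _ _ (lam ^ 2 / c) _ (is_RInt_hess_tangent r Hr))).
    unfold minus, plus, opp, scal in H; simpl in H; unfold mult in H; simpl in H.
    replace (lam - lam ^ 2 / c * (gap_s r (3 / 4) - gap_s r (1 / 4)))
      with ((3 / 4 - 1 / 4) * (2 * lam) + - (lam ^ 2 / c * (gap_s r (3 / 4) - gap_s r (1 / 4))))
      by (field; lra).
    exact H. }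
  assert (Hnn : is_RInt (fun s => hess phi (perp tau) (perp tau) (X r s)) (1 / 4) (3 / 4) (flux_deriv r)).
  { apply (RInt_correct (V := R_CompleteNormedModule)), (ex_RInt_continuous (V := R_CompleteNormedModule)).
    rewrite Rmin_left, Rmax_right by lra. intros s Hs. apply continuous_hess_chart; lra. }
  refine (is_RInt_le _ _ (1 / 4) (3 / 4) _ _ _ Hlow Hnn _); [lra |].
  intros s Hs. apply hess_normal_lower; lra.
Qed.

Lemma flux_deriv_ge_inv (r : R) : 0 < r <= r0 / 2 -> c / (32 * gap_r_bound) / r <= flux_deriv r.
Proof.
  intros Hr. assert (HK := gap_r_bound_ge_1).
  set (lam := c / (16 * r * gap_r_bound)).
  assert (Hge := flux_deriv_ge r lam Hr).
  assert (Hle := gap_s_increment_le r Hr).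
  assert (Hlam2 : 0 <= lam ^ 2 / c) by (apply Rdiv_le_0_compat; [apply pow2_ge_0 | lra]).
  assert (lam ^ 2 / c * (gap_s r (3 / 4) - gap_s r (1 / 4)) <= lam ^ 2 / c * (8 * r * gap_r_bound))
    by (apply Rmult_le_compat_l; lra).
  assert (lam - lam ^ 2 / c * (8 * r * gap_r_bound) = c / (32 * gap_r_bound) / r)
    by (unfold lam; field; lra).
  lra.
Qed.

Theorem edge_contact_absurd : False.
Proof.
  assert (HK := gap_r_bound_ge_1).
  apply (derive_ge_inv_unbounded flux flux_deriv (r0 / 2) (c / (32 * gap_r_bound)) (gap_r_bound / 2)).
  - lra.
  - apply Rdiv_lt_0_compat; lra.
  - intros r Hr. apply is_derive_flux. lra.
  - exact flux_deriv_ge_inv.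
  - exact flux_bounded.
Qed.

End EdgeBlowUp.

(** * The polygon and the subgradient sets *)

Lemma nxt_spec (n i : nat) : (i < n)%nat ->
  ((i + 1 < n)%nat /\ nxt n i = (i + 1)%nat) \/ ((i + 1 = n)%nat /\ nxt n i = 0%nat).
Proof.
  intros H. unfold nxt. destruct (Nat.eq_dec (i + 1) n) as [E | E].
  - right. split; [exact E |]. rewrite E. apply Nat.Div0.mod_same.
  - left. split; [lia |]. apply Nat.mod_small. lia.
Qed.

Lemma nxt_lt (n i : nat) : (i < n)%nat -> (nxt n i < n)%nat.
Proof. intros H. destruct (nxt_spec n i H) as [[? ->] | [? ->]]; lia. Qed.

Lemma prv_lt (n i : nat) : (i < n)%nat -> (prv n i < n)%nat.
Proof. intros H. apply Nat.mod_upper_bound. lia. Qed.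

Lemma nxt_neq (n i : nat) : (2 <= n)%nat -> (i < n)%nat -> nxt n i <> i.
Proof. intros H2 H. destruct (nxt_spec n i H) as [[? ->] | [? ->]]; lia. Qed.

Lemma nxt_nxt_neq (n i : nat) : (3 <= n)%nat -> (i < n)%nat -> nxt n (nxt n i) <> i.
Proof.
  intros H3 H. destruct (nxt_spec n i H) as [[H1 ->] | [H1 ->]].
  - destruct (nxt_spec n (i + 1) H1) as [[? ->] | [? ->]]; lia.
  - destruct (nxt_spec n 0 ltac:(lia)) as [[? ->] | [? ->]]; lia.
Qed.

Lemma exists_pos_forall_lt (n : nat) (P : nat -> R -> Prop) :
  (forall k d d', P k d -> 0 < d' <= d -> P k d') ->
  (forall k, (k < n)%nat -> exists d, 0 < d /\ P k d) ->
  exists d, 0 < d /\ forall k, (k < n)%nat -> P k d.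
Proof.
  intros Hmono. induction n as [| n IH]; intros H.
  - exists 1. split; [lra | intros k Hk; lia].
  - destruct IH as [d1 [Hd1 H1]]; [intros k Hk; apply H; lia |].
    destruct (H n (Nat.lt_succ_diag_r n)) as [d2 [Hd2 H2]].
    assert (Hmin : 0 < Rmin d1 d2) by (apply Rmin_pos; lra).
    exists (Rmin d1 d2). split; [exact Hmin |].
    intros k Hk. destruct (Nat.eq_dec k n) as [-> | Hne].
    + apply Hmono with d2; [exact H2 | split; [exact Hmin | apply Rmin_r]].
    + apply Hmono with d1; [apply H1; lia | split; [exact Hmin | apply Rmin_l]].
Qed.

Lemma eventually_pos_on_strip (al be ga : R) :
  0 <= al -> 0 <= be -> 0 < al + be \/ 0 < ga ->
  exists d, 0 < d /\ forall r s, 0 < r <= d -> 1 / 8 <= s <= 7 / 8 ->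
    (1 - s) * al + s * be + r * ga > 0.
Proof.
  intros Hal Hbe [Hab | Hga].
  - assert (Hg : 0 < Rabs ga + 1) by (pose proof (Rabs_pos ga); lra).
    exists ((al + be) / (8 * (Rabs ga + 1))). split; [apply Rdiv_lt_0_compat; lra |].
    intros r s [Hr0 Hr] Hs.
    assert (r * (8 * (Rabs ga + 1)) <= al + be).
    { apply Rmult_le_reg_r with (/ (8 * (Rabs ga + 1))); [apply Rinv_0_lt_compat; lra |].
      rewrite Rmult_assoc, Rinv_r by lra. unfold Rdiv in Hr. lra. }
    pose proof (Rabs_maj2 ga). pose proof (Rabs_pos ga). nra.
  - exists 1. split; [lra |]. intros r s Hr Hs. nra.
Qed.

Lemma open_forall_lt (n : nat) (P : nat -> pt -> Prop) :
  (forall k, (k < n)%nat -> open (P k)) -> open (fun u => forall k, (k < n)%nat -> P k u).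
Proof.
  induction n as [| n IH]; intros H.
  - apply (open_ext (fun _ => True)); [intros u; split; intros; [lia | exact I] | apply open_true].
  - apply (open_ext (fun u => (forall k, (k < n)%nat -> P k u) /\ P n u)).
    + intros u. split.
      * intros [H1 H2] k Hk. destruct (Nat.eq_dec k n) as [-> | Hne]; [exact H2 | apply H1; lia].
      * intros Hu. split; [intros k Hk; apply Hu; lia | apply Hu; lia].
    + apply open_and; [apply IH; intros k Hk; apply H; lia | apply H; lia].
Qed.

Lemma open_halfplane (e q : pt) : open (fun u : pt => cross e (psub u q) > 0).
Proof.
  apply (open_comp (fun u : pt => cross e (psub u q)) (fun z => 0 < z)); [| apply open_gt].
  intros u _.
  apply (continuous_ext (fun w : R * R => (snd e * fst q - fst e * snd q) + fst w * (- snd e) + snd w * fst e)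
    (fun u : pt => cross e (psub u q))).
  - intros w. unfold cross, psub; simpl. ring.
  - apply continuous_affine_R2.
Qed.

Lemma cross_pcomb (e a b q : pt) (t : R) :
  cross e (psub (pcomb t a b) q) = (1 - t) * cross e (psub a q) + t * cross e (psub b q).
Proof. unfold cross, psub, pcomb; simpl. ring. Qed.

Lemma cross_chart_edge (e P0 P1 q : pt) (r s : R) :
  cross e (psub (chart P0 (perp (psub P1 P0)) (psub P1 P0) r s) q)
  = (1 - s) * cross e (psub P0 q) + s * cross e (psub P1 q) + r * cross e (perp (psub P1 P0)).
Proof. unfold cross, psub, chart, perp; simpl. ring. Qed.

Lemma chart_edge (P0 P1 : pt) (s : R) : chart P0 (perp (psub P1 P0)) (psub P1 P0) 0 s = pcomb s P0 P1.
Proof. unfold chart, perp, psub, pcomb; simpl. f_equal; ring. Qed.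

Lemma polyU_open (n : nat) (p : nat -> pt) : open (polyU n p).
Proof. apply open_forall_lt. intros k _. apply open_halfplane. Qed.

Section ConvexPolygon.

Variables (n : nat) (p : nat -> pt).
Hypothesis polygon : ccw_convex_polygon n p.

Lemma cross_vertex_nonneg (k j : nat) : (k < n)%nat -> (j < n)%nat ->
  cross (psub (p (nxt n k)) (p k)) (psub (p j) (p k)) >= 0.
Proof.
  intros Hk Hj. destruct (Nat.eq_dec j k) as [-> |]; [| destruct (Nat.eq_dec j (nxt n k)) as [-> |]].
  - right. unfold cross, psub; simpl. ring.
  - right. unfold cross, psub; simpl. ring.
  - left. apply (proj2 polygon); assumption.
Qed.

Lemma vertex_in_closure (j : nat) : (j < n)%nat -> polyUbar n p (p j).
Proof. intros Hj k Hk. exact (cross_vertex_nonneg k j Hk Hj). Qed.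

Lemma segment_in_closure (i j : nat) (t : R) : (i < n)%nat -> (j < n)%nat -> 0 <= t <= 1 ->
  polyUbar n p (pcomb t (p i) (p j)).
Proof.
  intros Hi Hj Ht k Hk. rewrite cross_pcomb.
  assert (Ci := cross_vertex_nonneg k i Hk Hi). assert (Cj := cross_vertex_nonneg k j Hk Hj).
  nra.
Qed.

Lemma vertex_sub_nonzero (i j : nat) : (i < n)%nat -> (j < n)%nat -> i <> j ->
  psub (p j) (p i) <> (0, 0).
Proof.
  intros Hi Hj Hij E. apply (proj1 polygon j i Hj Hi (not_eq_sym Hij)).
  unfold psub in E. injection E. destruct (p i), (p j); simpl. intros. f_equal; lra.
Qed.

Lemma chord_in_interior (i j : nat) (t : R) :
  (i < n)%nat -> (j < n)%nat -> i <> j -> j <> nxt n i -> i <> nxt n j ->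
  0 < t < 1 -> polyU n p (pcomb t (p i) (p j)).
Proof.
  intros Hi Hj Hij Hji Hij' Ht k Hk. rewrite cross_pcomb.
  assert (Ci := cross_vertex_nonneg k i Hk Hi). assert (Cj := cross_vertex_nonneg k j Hk Hj).
  destruct (Nat.eq_dec i k) as [<- |]; [| destruct (Nat.eq_dec i (nxt n k)) as [-> |]].
  - assert (0 < cross (psub (p (nxt n i)) (p i)) (psub (p j) (p i))) by (apply (proj2 polygon); auto).
    nra.
  - assert (0 < cross (psub (p (nxt n k)) (p k)) (psub (p j) (p k))) by (apply (proj2 polygon); auto; lia).
    nra.
  - assert (0 < cross (psub (p (nxt n k)) (p k)) (psub (p i) (p k))) by (apply (proj2 polygon); auto).
    nra.
Qed.

End ConvexPolygon.

Lemma fold_right_sum_ge_term (f : nat -> R) (l : list nat) (k : nat) :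
  (forall i, 0 <= f i) -> In k l -> f k <= fold_right Rplus 0 (map f l).
Proof.
  intros Hf. induction l as [| a l IH]; simpl; [tauto |].
  assert (G : 0 <= fold_right Rplus 0 (map f l)).
  { clear IH. induction l as [| b l' IH']; simpl; [lra | specialize (Hf b); lra]. }
  intros [-> | Hin]; [lra | specialize (IH Hin); specialize (Hf a); lra].
Qed.

Lemma Vfun_ge_term (n : nat) (A : R) (p : nat -> pt) (u : pt) (k : nat) :
  0 <= A -> (k < n)%nat -> / (2 * enorm (psub u (p k))) <= Vfun n A p u.
Proof.
  intros HA Hk. unfold Vfun.
  assert (fold_right Rplus 0 (map (fun i => / (2 * enorm (psub u (p i)))) (seq 0 n))
            >= / (2 * enorm (psub u (p k)))); [| lra].
  apply Rle_ge, (fold_right_sum_ge_term (fun i => / (2 * enorm (psub u (p i))))).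
  - intros i. destruct (Req_dec (enorm (psub u (p i))) 0) as [-> | Hne].
    + rewrite Rmult_0_r, Rinv_0. lra.
    + apply Rlt_le, Rinv_0_lt_compat. assert (0 <= enorm (psub u (p i))) by apply sqrt_pos. lra.
  - apply in_seq. lia.
Qed.

Lemma Vfun_pos_on_interior (n : nat) (A : R) (p : nat -> pt) (u : pt) :
  (0 < n)%nat -> 0 <= A -> polyU n p u -> 0 < Vfun n A p u.
Proof.
  intros Hn HA Hu.
  assert (Hne : psub u (p 0%nat) <> (0, 0)).
  { intros E. specialize (Hu 0%nat Hn). rewrite E in Hu. unfold cross in Hu; simpl in Hu. lra. }
  assert (Hpos : 0 < enorm (psub u (p 0%nat))) by (apply sqrt_lt_R0, norm2_pos, Hne).
  assert (V := Vfun_ge_term n A p u 0 HA Hn).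
  assert (0 < / (2 * enorm (psub u (p 0%nat)))) by (apply Rinv_0_lt_compat; lra). lra.
Qed.

Lemma Vfun_ge_near_vertex (n : nat) (A : R) (p : nat -> pt) (i : nat) (tau : pt) (r s : R) :
  0 <= A -> (i < n)%nat -> tau <> (0, 0) -> 0 < r <= 1 -> 0 <= s <= 1 ->
  / (2 * sqrt (2 * (fst tau ^ 2 + snd tau ^ 2))) <= Vfun n A p (chart (p i) (perp tau) tau r s).
Proof.
  intros HA Hi Htau Hr Hs. assert (HT := norm2_pos tau Htau).
  set (T2 := fst tau ^ 2 + snd tau ^ 2) in *.
  assert (V := Vfun_ge_term n A p (chart (p i) (perp tau) tau r s) i HA Hi).
  replace (enorm (psub (chart (p i) (perp tau) tau r s) (p i))) with (sqrt ((r ^ 2 + s ^ 2) * T2)) in V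
    by (unfold enorm, chart, psub, perp, T2; simpl; f_equal; ring).
  assert (Hpos : 0 < sqrt ((r ^ 2 + s ^ 2) * T2)) by (apply sqrt_lt_R0, Rmult_lt_0_compat; nra).
  assert (Hle : sqrt ((r ^ 2 + s ^ 2) * T2) <= sqrt (2 * T2))
    by (apply sqrt_le_1_alt, Rmult_le_compat_r; nra).
  apply Rle_trans with (/ (2 * sqrt ((r ^ 2 + s ^ 2) * T2))); [apply Rinv_le_contravar |]; lra.
Qed.

Lemma closed_subgradient_set (P : pt -> Prop) (d : pt -> pt) (c : pt -> R) :
  closed (fun y => forall u, P u -> c u >= dot y (d u)).
Proof.
  intros y Hy u Hu. apply Rnot_lt_ge. intros Hlt. apply Hy.
  assert (Hcont : continuous (fun z : pt => dot z (d u)) y).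
  { apply (continuous_ext (fun w : R * R => 0 + fst w * fst (d u) + snd w * snd (d u))
      (fun z : pt => dot z (d u))).
    - intros w. unfold dot; simpl. ring.
    - apply continuous_affine_R2. }
  apply (filter_imp (fun z => c u < dot z (d u))).
  - intros z Hz Hall. specialize (Hall u Hu). lra.
  - exact (Hcont _ (open_gt (c u) _ Hlt)).
Qed.

Lemma subgrad_closed (n : nat) (p : nat -> pt) (phi : pt -> R) (i : nat) :
  closed (subgrad n p phi i).
Proof. exact (closed_subgradient_set _ (fun u => psub u (p i)) (fun u => phi u - phi (p i))). Qed.

Lemma subgrad_convex (n : nat) (p : nat -> pt) (phi : pt -> R) (i : nat) :
  convex_set (subgrad n p phi i).
Proof.
  intros y z t Hy Hz Ht u Hu. specialize (Hy u Hu). specialize (Hz u Hu).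
  replace (dot (pcomb t y z) (psub u (p i)))
    with ((1 - t) * dot y (psub u (p i)) + t * dot z (psub u (p i))) by (unfold dot, pcomb; simpl; ring).
  nra.
Qed.

Section Subgradients.

Variables (n : nat) (p : nat -> pt) (phi : pt -> R) (y : pt).
Hypothesis polygon : ccw_convex_polygon n p.

Lemma subgrad_vertex_le (i j : nat) : (i < n)%nat -> (j < n)%nat ->
  subgrad n p phi i y -> dot y (psub (p j) (p i)) <= phi (p j) - phi (p i).
Proof. intros Hi Hj Hy. apply Rge_le, Hy, vertex_in_closure; assumption. Qed.

Lemma subgrad_in_W (b : nat -> R) (i : nat) : (i < n)%nat ->
  (forall j, (j < n)%nat -> phi (p j) = b j) -> subgrad n p phi i y -> Wset n p b i y.
Proof.
  intros Hi Hb Hy.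
  assert (Hn := subgrad_vertex_le i _ Hi (nxt_lt n i Hi) Hy).
  assert (Hp := subgrad_vertex_le i _ Hi (prv_lt n i Hi) Hy).
  rewrite !Hb in Hn, Hp by auto using nxt_lt, prv_lt. split; assumption.
Qed.

Lemma common_subgrad_slope (i j : nat) : (i < n)%nat -> (j < n)%nat ->
  subgrad n p phi i y -> subgrad n p phi j y ->
  phi (p j) - phi (p i) = dot y (psub (p j) (p i)).
Proof.
  intros Hi Hj Si Sj.
  assert (Hij := subgrad_vertex_le i j Hi Hj Si). assert (Hji := subgrad_vertex_le j i Hj Hi Sj).
  replace (dot y (psub (p i) (p j))) with (- dot y (psub (p j) (p i))) in Hji
    by (unfold dot, psub; simpl; ring).
  lra.
Qed.

Hypothesis phi_convex : convex_on (polyUbar n p) phi.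

Lemma common_subgrad_segment (i j : nat) (t : R) : (i < n)%nat -> (j < n)%nat -> 0 <= t <= 1 ->
  subgrad n p phi i y -> subgrad n p phi j y ->
  phi (pcomb t (p i) (p j)) = phi (p i) + t * dot y (psub (p j) (p i)).
Proof.
  intros Hi Hj Ht Si Sj.
  assert (Hslope := common_subgrad_slope i j Hi Hj Si Sj).
  apply Rle_antisym.
  - assert (Hc := phi_convex (p i) (p j) t (vertex_in_closure n p polygon i Hi)
                    (vertex_in_closure n p polygon j Hj) Ht).
    replace (phi (p j)) with (phi (p i) + dot y (psub (p j) (p i))) in Hc by lra.
    lra.
  - assert (Hs := Si _ (segment_in_closure n p polygon i j t Hi Hj Ht)).
    replace (dot y (psub (pcomb t (p i) (p j)) (p i))) with (t * dot y (psub (p j) (p i))) in Hs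
      by (unfold dot, psub, pcomb; simpl; ring).
    lra.
Qed.

End Subgradients.

Lemma nonadjacent_no_common_subgrad (n : nat) (p : nat -> pt) (A : R) (b : nat -> R)
  (phi : pt -> R) (i j : nat) (y : pt) :
  ccw_convex_polygon n p -> 0 <= A -> is_solution n A p b phi ->
  (i < n)%nat -> (j < n)%nat -> i <> j -> j <> nxt n i -> i <> nxt n j ->
  subgrad n p phi i y -> subgrad n p phi j y -> False.
Proof.
  intros polygon HA [_ [Hconv [Hsmooth [Hdet _]]]] Hi Hj Hij Hji Hij' Si Sj.
  set (d := psub (p j) (p i)).
  set (m := pcomb (1 / 2) (p i) (p j)).
  assert (Hm : polyU n p m) by (apply chord_in_interior; auto; lra).
  assert (Hflat : hess phi d d m = 0).
  { apply (hess_zero_of_affine_on_line (polyU n p) phi (polyU_open n p) Hsmooth d m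
             (phi (p i) + dot y d / 2) (dot y d) Hm).
    apply locally_R. exists (1 / 2). split; [lra |]. intros t Ht.
    rewrite Rminus_0_r in Ht. apply Rabs_def2 in Ht.
    replace (padd m d t) with (pcomb (1 / 2 + t) (p i) (p j))
      by (unfold m, d, padd, pcomb, psub; simpl; f_equal; field).
    rewrite (common_subgrad_segment n p phi y polygon Hconv i j (1 / 2 + t) Hi Hj ltac:(lra) Si Sj).
    fold d. field. }
  assert (Hpos : 0 < hess phi d d m).
  { apply (hess_pos (polyU n p) phi (polyU_open n p) Hsmooth (polyUbar n p)); auto.
    - intros u Hu k Hk. left. exact (Hu k Hk).
    - rewrite Hdet by exact Hm. apply Vfun_pos_on_interior; auto. lia.
    - exact (vertex_sub_nonzero n p polygon i j Hi Hj Hij). }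
  lra.
Qed.


Lemma strip_in_interior (n : nat) (p : nat -> pt) (i : nat) :
  (3 <= n)%nat -> ccw_convex_polygon n p -> (i < n)%nat ->
  let tau := psub (p (nxt n i)) (p i) in
  exists r0, 0 < r0 /\ forall r s, 0 < r <= r0 -> 1 / 8 <= s <= 7 / 8 ->
    polyU n p (chart (p i) (perp tau) tau r s).
Proof.
  intros H3 polygon Hi tau.
  cut (exists d, 0 < d /\ forall k, (k < n)%nat -> forall r s, 0 < r <= d -> 1 / 8 <= s <= 7 / 8 ->
         cross (psub (p (nxt n k)) (p k)) (psub (chart (p i) (perp tau) tau r s) (p k)) > 0).
  { intros [d [Hd Hk]]. exists d. split; [exact Hd |]. intros r s Hr Hs k Hk'. apply Hk; assumption. }
  apply exists_pos_forall_lt; [intros k d d' Hk Hd' r s Hr Hs; apply Hk; lra |].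
  intros k Hk. unfold tau. setoid_rewrite cross_chart_edge.
  assert (Hj := nxt_lt n i Hi).
  assert (Ci := cross_vertex_nonneg n p polygon k i Hk Hi).
  assert (Cj := cross_vertex_nonneg n p polygon k (nxt n i) Hk Hj).
  apply eventually_pos_on_strip; [lra | lra |].
  destruct (Nat.eq_dec k i) as [-> | Hki].
  - right. rewrite cross_perp. apply norm2_pos, (vertex_sub_nonzero n p polygon); auto.
    apply not_eq_sym, nxt_neq; [lia | exact Hi].
  - left. destruct (Nat.eq_dec i (nxt n k)) as [Ek | Ek].
    + assert (0 < cross (psub (p (nxt n k)) (p k)) (psub (p (nxt n i)) (p k))); [| lra].
      apply (proj2 polygon); auto.
      * rewrite Ek. apply nxt_nxt_neq; assumption.
      * rewrite <- Ek. apply nxt_neq; [lia | exact Hi].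
    + assert (0 < cross (psub (p (nxt n k)) (p k)) (psub (p i) (p k))) by (apply (proj2 polygon); auto).
      lra.
Qed.

Lemma adjacent_no_common_subgrad (n : nat) (p : nat -> pt) (A : R) (b : nat -> R)
  (phi : pt -> R) (i : nat) (y : pt) :
  (3 <= n)%nat -> ccw_convex_polygon n p -> 0 <= A -> is_solution n A p b phi -> (i < n)%nat ->
  subgrad n p phi i y -> subgrad n p phi (nxt n i) y -> False.
Proof.
  intros H3 polygon HA [_ [Hconv [Hsmooth [Hdet _]]]] Hi Si Sj.
  assert (Hj := nxt_lt n i Hi).
  assert (Htau := vertex_sub_nonzero n p polygon i (nxt n i) Hi Hj (not_eq_sym (nxt_neq n i ltac:(lia) Hi))).
  destruct (strip_in_interior n p i H3 polygon Hi) as [d [Hd Hstrip]].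
  set (tau := psub (p (nxt n i)) (p i)) in *.
  set (T2 := fst tau ^ 2 + snd tau ^ 2).
  assert (HT2 : 0 < T2) by (apply norm2_pos, Htau).
  assert (HL : 0 < sqrt (2 * T2)) by (apply sqrt_lt_R0; lra).
  pose proof (Rmin_l d 1). pose proof (Rmin_r d 1).
  apply (edge_contact_absurd (polyU n p) (polyUbar n p) phi (p i) tau y (Rmin d 1)
           (T2 ^ 2 / (2 * sqrt (2 * T2)))); auto using polyU_open.
  - intros u Hu k Hk. left. exact (Hu k Hk).
  - apply Rmin_pos; lra.
  - apply Rdiv_lt_0_compat; [apply pow_lt |]; lra.
  - intros r s Hr Hs. apply Hstrip; [lra | exact Hs].
  - intros s Hs. unfold tau. rewrite chart_edge. apply segment_in_closure; assumption.
  - intros s Hs. unfold tau. rewrite chart_edge.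
    exact (common_subgrad_segment n p phi y polygon Hconv i (nxt n i) s Hi Hj Hs Si Sj).
  - intros r s Hr Hs.
    rewrite Hdet by (apply Hstrip; [lra | exact Hs]). rewrite cross_perp. fold T2.
    assert (V := Vfun_ge_near_vertex n A p i tau r s HA Hi Htau ltac:(lra) ltac:(lra)). fold T2 in V.
    unfold Rdiv. rewrite Rmult_comm. apply Rmult_le_compat_r; [nra | exact V].
Qed.

Theorem mainTheorem6 (n : nat) (p : nat -> pt) (A : R) (b : nat -> R)
  (phi : pt -> R) :
  (3 <= n)%nat ->
  ccw_convex_polygon n p ->
  0 <= A ->
  is_solution n A p b phi ->
  (forall i j, (i < n)%nat -> (j < n)%nat -> i <> j ->
     forall y, ~ (subgrad n p phi i y /\ subgrad n p phi j y)) /\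
  (forall i, (i < n)%nat ->
     closed (subgrad n p phi i) /\ convex_set (subgrad n p phi i) /\
     (forall y, subgrad n p phi i y -> Wset n p b i y)).
Proof.
  intros H3 polygon HA Hsol. split.
  - intros i j Hi Hj Hij y [Si Sj].
    destruct (Nat.eq_dec j (nxt n i)) as [-> | Hji].
    { exact (adjacent_no_common_subgrad n p A b phi i y H3 polygon HA Hsol Hi Si Sj). }
    destruct (Nat.eq_dec i (nxt n j)) as [-> | Hij'].
    { exact (adjacent_no_common_subgrad n p A b phi j y H3 polygon HA Hsol Hj Sj Si). }
    exact (nonadjacent_no_common_subgrad n p A b phi i j y polygon HA Hsol Hi Hj Hij Hji Hij' Si Sj).
  - intros i Hi. destruct Hsol as (_ & _ & _ & _ & Hb & _).
    split; [| split].
    + apply subgrad_closed.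
    + apply subgrad_convex.
    + intros y. apply (subgrad_in_W n p phi y polygon b i Hi Hb).
Qed.
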